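(* For every finite set $Q$, the category $\mathbf{Lam}_Q$ is cartesian closed and the quotient functor $\pi_Q \colon \mathbf{Lam} \to \mathbf{Lam}_Q$ (identity on objects, sending a term to its $\sim_Q$-class) is a cartesian closed functor. Moreover, every partial surjection $f \colon Q \twoheadrightarrow Q'$ between finite sets induces a cartesian closed identity-on-objects functor $\mathbf{Lam}_f \colon \mathbf{Lam}_Q \to \mathbf{Lam}_{Q'}$ such that $\mathbf{Lam}_f \circ \pi_Q = \pi_{Q'}$.
   Context: Simple types are built from a base type $o$ (with the type constructors of the simply typed $\lambda$-calculus, so that $\mathbf{Lam}$ is the free cartesian closed category on one object). $\Lambda(A)$ is the set of closed $\lambda$-terms of type $A$ modulo $\beta\eta$; $\mathbf{Lam}$ has simple types as objects and $\mathbf{Lam}(A,B) = \Lambda(A\Rightarrow B)$. For a finite set $Q$, $[\![-]\!]_Q$ is the standard interpretation in finite sets with $[\![o]\!]_Q = Q$ and $[\![A\Rightarrow B]\!]_Q$ all functions. For each type $A$, $M \sim_Q^A N$ iff $[\![M]\!]_Q = [\![N]\!]_Q$; these relations form a congruence on $\mathbf{Lam}$, and $\mathbf{Lam}_Q = \mathbf{Lam}/\sim_Q$, i.e. $\mathbf{Lam}_Q(A,B) = \Lambda(A\Rightarrow B)/\sim_Q^{A\Rightarrow B}$. A partial surjection $f\colon Q\twoheadrightarrow Q'$ is a relation that is the graph of a partial function surjective onto $Q'$. *)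

From Stdlib Require Import List RelationClasses.
From mathcomp Require Import all_boot.
Import ListNotations.
Set Implicit Arguments.
Unset Strict Implicit.

Inductive ty : Type := Base | One | Prod (A B : ty) | Arr (A B : ty).

Fixpoint var (G : list ty) (A : ty) : Type :=
  match G with
  | nil => Empty_set
  | B :: G' => ((B = A) + var G' A)%type
  end.

Inductive tm : list ty -> ty -> Type :=
| Var G A : var G A -> tm G A
| Lam G A B : tm (A :: G) B -> tm G (Arr A B)
| App G A B : tm G (Arr A B) -> tm G A -> tm G B
| Star G : tm G One
| Pair G A B : tm G A -> tm G B -> tm G (Prod A B)
| Fst G A B : tm G (Prod A B) -> tm G A
| Snd G A B : tm G (Prod A B) -> tm G B.

Arguments Var {G A}.
Arguments Lam {G A B}.
Arguments App {G A B}.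
Arguments Star {G}.
Arguments Pair {G A B}.
Arguments Fst {G A B}.
Arguments Snd {G A B}.

Definition ren (G D : list ty) := forall A, var G A -> var D A.

Definition ext_ren G D (r : ren G D) (B : ty) : ren (B :: G) (B :: D) :=
  fun A v => match v with
             | inl e => inl e
             | inr w => inr (r A w)
             end.
Arguments ext_ren {G D} r B.

Fixpoint rename G A (t : tm G A) : forall D, ren G D -> tm D A :=
  match t in tm G A return forall D, ren G D -> tm D A with
  | Var _ _ v => fun D r => Var (r _ v)
  | Lam G A B t => fun D r => Lam (rename t (ext_ren r A))
  | App _ _ _ t u => fun D r => App (rename t r) (rename u r)
  | Star _ => fun D r => Star
  | Pair _ _ _ t u => fun D r => Pair (rename t r) (rename u r)
  | Fst _ _ _ t => fun D r => Fst (rename t r)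
  | Snd _ _ _ t => fun D r => Snd (rename t r)
  end.

Definition wk_ren G B : ren G (B :: G) := fun A x => inr x.
Arguments wk_ren G B : clear implicits.

Definition wk G B A (M : tm G A) : tm (B :: G) A := rename M (wk_ren G B).

Definition vz G A : tm (A :: G) A := @Var (A :: G) A (inl (erefl A)).
Arguments vz G A : clear implicits.
Arguments wk {G} B {A} M.

Definition sub (G D : list ty) := forall A, var G A -> tm D A.

Definition exts G D (s : sub G D) (B : ty) : sub (B :: G) (B :: D) :=
  fun A v => match v with
             | inl e => @Var (B :: D) A (inl e)
             | inr w => rename (s A w) (wk_ren D B)
             end.
Arguments exts {G D} s B.

Fixpoint subst G A (t : tm G A) : forall D, sub G D -> tm D A :=
  match t in tm G A return forall D, sub G D -> tm D A with
  | Var _ _ v => fun D s => s _ v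
  | Lam G A B t => fun D s => Lam (subst t (exts s A))
  | App _ _ _ t u => fun D s => App (subst t s) (subst u s)
  | Star _ => fun D s => Star
  | Pair _ _ _ t u => fun D s => Pair (subst t s) (subst u s)
  | Fst _ _ _ t => fun D s => Fst (subst t s)
  | Snd _ _ _ t => fun D s => Snd (subst t s)
  end.

Definition subst1 G A (N : tm G A) : sub (A :: G) G :=
  fun C v => match v with
             | inl e => eq_rect A (tm G) N C e
             | inr w => Var w
             end.

Inductive bheq : forall G A, tm G A -> tm G A -> Prop :=
| be_refl G A (M : tm G A) : bheq M M
| be_sym G A (M N : tm G A) : bheq M N -> bheq N M
| be_trans G A (M N P : tm G A) : bheq M N -> bheq N P -> bheq M P
| be_lam G A B (M M' : tm (A :: G) B) : bheq M M' -> bheq (Lam M) (Lam M')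
| be_app G A B (M M' : tm G (Arr A B)) (N N' : tm G A) :
    bheq M M' -> bheq N N' -> bheq (App M N) (App M' N')
| be_pair G A B (M M' : tm G A) (N N' : tm G B) :
    bheq M M' -> bheq N N' -> bheq (Pair M N) (Pair M' N')
| be_fst G A B (M M' : tm G (Prod A B)) : bheq M M' -> bheq (Fst M) (Fst M')
| be_snd G A B (M M' : tm G (Prod A B)) : bheq M M' -> bheq (Snd M) (Snd M')
| be_beta G A B (M : tm (A :: G) B) (N : tm G A) :
    bheq (App (Lam M) N) (subst M (subst1 N))
| be_eta_arr G A B (M : tm G (Arr A B)) :
    bheq M (Lam (App (wk A M) (vz G A)))
| be_beta_fst G A B (M : tm G A) (N : tm G B) : bheq (Fst (Pair M N)) M
| be_beta_snd G A B (M : tm G A) (N : tm G B) : bheq (Snd (Pair M N)) N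
| be_eta_prod G A B (M : tm G (Prod A B)) : bheq M (Pair (Fst M) (Snd M))
| be_eta_one G (M : tm G One) : bheq M Star.

Fixpoint sem (Q : Type) (A : ty) : Type :=
  match A with
  | Base => Q
  | One => unit
  | Prod A B => (sem Q A * sem Q B)%type
  | Arr A B => sem Q A -> sem Q B
  end.

Fixpoint env (Q : Type) (G : list ty) : Type :=
  match G with
  | nil => unit
  | A :: G' => (sem Q A * env Q G')%type
  end.

Fixpoint lookup (Q : Type) (G : list ty) (A : ty) : var G A -> env Q G -> sem Q A :=
  match G return var G A -> env Q G -> sem Q A with
  | nil => fun v _ => match v with end
  | B :: G' => fun v e =>
      match v with
      | inl h => eq_rect B (sem Q) (fst e) A h
      | inr w => lookup w (snd e)
      end
  end.

Fixpoint eval (Q : Type) G A (t : tm G A) : env Q G -> sem Q A :=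
  match t in tm G A return env Q G -> sem Q A with
  | Var _ _ v => fun e => lookup v e
  | Lam _ _ _ t => fun e x => eval t (x, e)
  | App _ _ _ t u => fun e => (eval t e) (eval u e)
  | Star _ => fun _ => tt
  | Pair _ _ _ t u => fun e => (eval t e, eval u e)
  | Fst _ _ _ t => fun e => fst (eval t e)
  | Snd _ _ _ t => fun e => snd (eval t e)
  end.

Definition interp (Q : Type) A (M : tm nil A) : sem Q A := eval (Q := Q) M tt.

Definition simQ (Q : finType) A (M N : tm nil A) : Prop :=
  interp (Finite.sort Q) M = interp (Finite.sort Q) N.

(** * Categories whose objects are the simple types (hom-sets given up to an
      equivalence relation, i.e. as setoids) *)
Record TyCat := {
  hom : ty -> ty -> Type;
  heq : forall A B, hom A B -> hom A B -> Prop;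
  idm : forall A, hom A A;
  comp : forall A B C, hom B C -> hom A B -> hom A C }.

Arguments heq {t A B}.
Arguments idm {t}.
Arguments comp {t A B C}.

Definition is_category (C : TyCat) : Prop :=
  (forall A B, Equivalence (@heq C A B)) /\
  (forall A B D (g g' : hom C B D) (f f' : hom C A B),
      heq g g' -> heq f f' -> heq (comp g f) (comp g' f')) /\
  (forall A B (f : hom C A B), heq (comp (idm B) f) f) /\
  (forall A B (f : hom C A B), heq (comp f (idm A)) f) /\
  (forall A B D E (h : hom C D E) (g : hom C B D) (f : hom C A B),
      heq (comp h (comp g f)) (comp (comp h g) f)).

Definition is_terminal (C : TyCat) (T : ty) : Prop :=
  forall X, exists f : hom C X T, forall g : hom C X T, heq g f.

Definition is_product (C : TyCat) (A B P : ty) (p1 : hom C P A) (p2 : hom C P B)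
  : Prop :=
  forall X (f : hom C X A) (g : hom C X B),
    exists h : hom C X P,
      heq (comp p1 h) f /\ heq (comp p2 h) g /\
      forall h' : hom C X P, heq (comp p1 h') f -> heq (comp p2 h') g -> heq h' h.

(* (E, ev : E x A -> B) is an exponential B^A, where (P,p1,p2) is a product
   of E and A *)
Definition is_exponential (C : TyCat) (A B E P : ty)
  (p1 : hom C P E) (p2 : hom C P A) (ev : hom C P B) : Prop :=
  is_product p1 p2 /\
  forall X Y (q1 : hom C Y X) (q2 : hom C Y A), is_product q1 q2 ->
  forall g : hom C Y B,
    exists l : hom C X E,
      (forall m : hom C Y P, heq (comp p1 m) (comp l q1) -> heq (comp p2 m) q2 ->
                            heq (comp ev m) g) /\
      (forall l' : hom C X E,
          (forall m : hom C Y P, heq (comp p1 m) (comp l' q1) ->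
                                heq (comp p2 m) q2 -> heq (comp ev m) g) ->
          heq l' l).

Definition is_ccc (C : TyCat) : Prop :=
  is_category C /\
  (exists T, is_terminal C T) /\
  (forall A B, exists P (p1 : hom C P A) (p2 : hom C P B), is_product p1 p2) /\
  (forall A B, exists E P (p1 : hom C P E) (p2 : hom C P A) (ev : hom C P B),
      is_exponential p1 p2 ev).

(** identity-on-objects functors: action on morphisms *)
Definition iofmap (C D : TyCat) := forall A B, hom C A B -> hom D A B.

Definition is_functor (C D : TyCat) (F : iofmap C D) : Prop :=
  (forall A B (f f' : hom C A B), heq f f' -> heq (F A B f) (F A B f')) /\
  (forall A, heq (F A A (idm A)) (idm A)) /\
  (forall A B E (g : hom C B E) (f : hom C A B),
      heq (F A E (comp g f)) (comp (F B E g) (F A B f))).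

Definition is_cc_functor (C D : TyCat) (F : iofmap C D) : Prop :=
  is_functor F /\
  (forall T, is_terminal C T -> is_terminal D T) /\
  (forall A B P (p1 : hom C P A) (p2 : hom C P B),
      is_product p1 p2 -> is_product (F _ _ p1) (F _ _ p2)) /\
  (forall A B E P (p1 : hom C P E) (p2 : hom C P A) (ev : hom C P B),
      is_exponential p1 p2 ev ->
      is_exponential (F _ _ p1) (F _ _ p2) (F _ _ ev)).

Definition tm_id A : tm nil (Arr A A) := Lam (vz nil A).
Definition tm_comp A B C (g : tm nil (Arr B C)) (f : tm nil (Arr A B))
  : tm nil (Arr A C) :=
  Lam (App (wk A g) (App (wk A f) (vz nil A))).

Definition Lam_cat : TyCat := {|
  hom := fun A B => tm nil (Arr A B);
  heq := fun A B M N => bheq M N;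
  idm := tm_id;
  comp := tm_comp |}.

Definition LamQ (Q : finType) : TyCat := {|
  hom := fun A B => tm nil (Arr A B);
  heq := fun A B M N => simQ Q M N;
  idm := tm_id;
  comp := tm_comp |}.

Definition piQ (Q : finType) : iofmap Lam_cat (LamQ Q) := fun A B M => M.

(* R is the graph of a partial function Q -> Q' surjective onto Q' *)
Definition partial_surjection (Q Q' : Type) (R : Q -> Q' -> Prop) : Prop :=
  (forall q a b, R q a -> R q b -> a = b) /\ (forall q', exists q, R q q').

(* Lam and Lam_Q are both quotients of the closed simply typed terms by a lambda-theory, an
   equivalence containing beta-eta and compatible with application.  In any such quotient the
   usual unit, projection, pairing, evaluation and currying terms form a cartesian closed
   structure, because the cartesian closed laws already hold up to beta-eta.  Moreover a cone
   (P, p1, p2) is a product iff <p1, p2> is invertible, and (P, p1, p2, ev) is an exponential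
   iff in addition the transpose of ev o <p1, p2>^-1 is invertible.  These characterizations
   are equational, so they survive passing to a coarser lambda-theory: the identity on terms
   is then a cartesian closed functor.  Finally beta-eta is contained in ~_Q by soundness of
   the set model, and ~_Q in ~_Q' for a partial surjection R : Q -> Q' by the logical relation
   generated by R, which is again a partial surjection at every type and relates [[M]]_Q to
   [[M]]_Q'. *)

From Stdlib Require Import Setoid Morphisms.
From Stdlib Require Import FunctionalExtensionality Classical IndefiniteDescription.
From mathcomp Require Import all_boot.
Set Implicit Arguments.

Local Notation "g ∘ f" := (tm_comp g f) (at level 40, left associativity).

Lemma rename_ext G A (M : tm G A) D (r1 r2 : ren G D) :
  (forall B v, r1 B v = r2 B v) -> rename M r1 = rename M r2.
Proof.
elim: M D r1 r2 => [*|{}G {}A B M IH D r1 r2 Hr|*|*|*|*|*] /=; f_equal; auto.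
by apply: IH => C [|w] //=; rewrite Hr.
Qed.

Lemma rename_rename G A (M : tm G A) D (r1 : ren G D) E (r2 : ren D E) :
  rename (rename M r1) r2 = rename M (fun B v => r2 B (r1 B v)).
Proof.
elim: M D r1 E r2 => [*|{}G {}A B M IH D r1 E r2|*|*|*|*|*] /=; f_equal; auto.
by rewrite IH; apply: rename_ext => C [].
Qed.

Lemma subst_ext G A (M : tm G A) D (s1 s2 : sub G D) :
  (forall B v, s1 B v = s2 B v) -> subst M s1 = subst M s2.
Proof.
elim: M D s1 s2 => [*|{}G {}A B M IH D s1 s2 Hs|*|*|*|*|*] /=; f_equal; auto.
by apply: IH => C [|w] //=; rewrite Hs.
Qed.

Lemma subst_rename G A (M : tm G A) D (r : ren G D) E (s : sub D E) :
  subst (rename M r) s = subst M (fun B v => s B (r B v)).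
Proof.
elim: M D r E s => [*|{}G {}A B M IH D r E s|*|*|*|*|*] /=; f_equal; auto.
by rewrite IH; apply: subst_ext => C [].
Qed.

Lemma subst_var G A (M : tm G A) D (r : ren G D) :
  subst M (fun B v => Var (r B v)) = rename M r.
Proof.
elim: M D r => [*|{}G {}A B M IH D r|*|*|*|*|*] /=; f_equal; auto.
by rewrite -IH; apply: subst_ext => C [].
Qed.

Definition lift D A (M : tm nil A) : tm D A := rename M (fun B v => match v with end).
Arguments lift : simpl never.

Lemma rename_closed A (M : tm nil A) D (r : ren nil D) : rename M r = lift D M.
Proof. by apply: rename_ext => ? []. Qed.

Lemma subst_closed A (M : tm nil A) D (s : sub nil D) : subst M s = lift D M.
Proof. by rewrite /lift -subst_var; apply: subst_ext => ? []. Qed.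

Lemma rename_lift A (M : tm nil A) D E (r : ren D E) : rename (lift D M) r = lift E M.
Proof. by rewrite /lift rename_rename rename_closed. Qed.

Lemma subst_lift A (M : tm nil A) D E (s : sub D E) : subst (lift D M) s = lift E M.
Proof. by rewrite /lift subst_rename subst_closed. Qed.

Lemma wk_closed A (M : tm nil A) B : wk B M = lift [:: B] M.
Proof. exact: rename_closed. Qed.

Lemma wk_lift A (M : tm nil A) D B : wk B (lift D M) = lift (B :: D) M.
Proof. exact: rename_lift. Qed.

#[global] Instance bheq_equiv G A : Equivalence (@bheq G A).
Proof. by split=> [M|M N|M N P]; [exact: be_refl | exact: be_sym | exact: be_trans]. Qed.
#[global] Instance Lam_bheq G A B : Proper (@bheq (A :: G) B ==> @bheq G (Arr A B)) Lam.
Proof. by move=> ? ? ?; apply: be_lam. Qed.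
#[global] Instance App_bheq G A B :
  Proper (@bheq G (Arr A B) ==> @bheq G A ==> @bheq G B) App.
Proof. by move=> ? ? ? ? ? ?; apply: be_app. Qed.
#[global] Instance Pair_bheq G A B :
  Proper (@bheq G A ==> @bheq G B ==> @bheq G (Prod A B)) Pair.
Proof. by move=> ? ? ? ? ? ?; apply: be_pair. Qed.
#[global] Instance Fst_bheq G A B : Proper (@bheq G (Prod A B) ==> @bheq G A) Fst.
Proof. by move=> ? ? ?; apply: be_fst. Qed.
#[global] Instance Snd_bheq G A B : Proper (@bheq G (Prod A B) ==> @bheq G B) Snd.
Proof. by move=> ? ? ?; apply: be_snd. Qed.

Lemma eta_lift A B (f : tm nil (Arr A B)) : bheq (Lam (App (lift [:: A] f) (vz nil A))) f.
Proof. by rewrite -wk_closed; symmetry; apply: be_eta_arr. Qed.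

(* Closed subterms are kept folded as [lift] so that beta-reduction only unfolds the
   surrounding term. *)
Ltac simpl_lift :=
  cbn -[lift]; rewrite ?wk_closed ?rename_closed ?wk_lift ?rename_lift ?subst_lift; cbn -[lift].
Ltac beta_reduce :=
  simpl_lift;
  repeat (first [rewrite be_beta | rewrite be_beta_fst | rewrite be_beta_snd]; simpl_lift).

Definition tm_unit X : tm nil (Arr X One) := Lam Star.
Definition tm_fst A B : tm nil (Arr (Prod A B) A) := Lam (Fst (vz nil (Prod A B))).
Definition tm_snd A B : tm nil (Arr (Prod A B) B) := Lam (Snd (vz nil (Prod A B))).
Definition tm_pair X A B (f : tm nil (Arr X A)) (g : tm nil (Arr X B))
  : tm nil (Arr X (Prod A B)) :=
  Lam (Pair (App (wk X f) (vz nil X)) (App (wk X g) (vz nil X))).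
Definition tm_ev A B : tm nil (Arr (Prod (Arr A B) A) B) :=
  Lam (App (Fst (vz nil _)) (Snd (vz nil _))).
Definition tm_curry X A B (k : tm nil (Arr (Prod X A) B)) : tm nil (Arr X (Arr A B)) :=
  Lam (Lam (App (wk A (wk X k)) (Pair (wk A (vz nil X)) (vz [:: X] A)))).

(* Each of [tm_comp], [tm_pair] and [tm_curry] is beta-eta-equal to a closed combinator applied
   to its arguments; this is why compatibility with application suffices below. *)
Definition comp_comb A B C : tm nil (Arr (Arr B C) (Arr (Arr A B) (Arr A C))) :=
  Lam (Lam (Lam (App (wk A (wk (Arr A B) (vz nil (Arr B C))))
                     (App (wk A (vz [:: Arr B C] (Arr A B))) (vz _ A))))).

Lemma tm_comp_comb A B C (g : tm nil (Arr B C)) (f : tm nil (Arr A B)) :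
  bheq (g ∘ f) (App (App (comp_comb A B C) g) f).
Proof. by rewrite /tm_comp /comp_comb; beta_reduce; reflexivity. Qed.

Definition pair_comb X A B : tm nil (Arr (Arr X A) (Arr (Arr X B) (Arr X (Prod A B)))) :=
  Lam (Lam (Lam (Pair (App (wk X (wk (Arr X B) (vz nil (Arr X A)))) (vz _ X))
                      (App (wk X (vz [:: Arr X A] (Arr X B))) (vz _ X))))).

Lemma tm_pair_comb X A B (f : tm nil (Arr X A)) (g : tm nil (Arr X B)) :
  bheq (tm_pair f g) (App (App (pair_comb X A B) f) g).
Proof. by rewrite /tm_pair /pair_comb; beta_reduce; reflexivity. Qed.

Definition curry_comb X A B : tm nil (Arr (Arr (Prod X A) B) (Arr X (Arr A B))) :=
  Lam (Lam (Lam (App (wk A (wk X (vz nil (Arr (Prod X A) B))))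
                     (Pair (wk A (vz [:: Arr (Prod X A) B] X)) (vz _ A))))).

Lemma tm_curry_comb X A B (k : tm nil (Arr (Prod X A) B)) :
  bheq (tm_curry k) (App (curry_comb X A B) k).
Proof. by rewrite /tm_curry /curry_comb; beta_reduce; reflexivity. Qed.

Definition tm_times X Y A (l : tm nil (Arr X Y)) : tm nil (Arr (Prod X A) (Prod Y A)) :=
  tm_pair (l ∘ tm_fst X A) (tm_snd X A).

Class lambda_theory (E : forall A, tm nil A -> tm nil A -> Prop) : Prop := {
  lambda_theory_equiv A : Equivalence (E A);
  lambda_theory_bheq A (M N : tm nil A) : bheq M N -> E A M N;
  lambda_theory_app A B : Proper (E (Arr A B) ==> E A ==> E B) (@App nil A B) }.
#[global] Existing Instances lambda_theory_equiv lambda_theory_app.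

Section LambdaTheory.
Context (E : forall A, tm nil A -> tm nil A -> Prop) `{lambda_theory E}.

#[global] Instance tm_comp_proper A B C :
  Proper (@E (Arr B C) ==> @E (Arr A B) ==> @E (Arr A C)) (@tm_comp A B C).
Proof.
move=> g g' Eg f f' Ef.
rewrite (lambda_theory_bheq (tm_comp_comb g f)) (lambda_theory_bheq (tm_comp_comb g' f')).
by rewrite Eg Ef; reflexivity.
Qed.

#[global] Instance tm_pair_proper X A B :
  Proper (@E (Arr X A) ==> @E (Arr X B) ==> @E (Arr X (Prod A B))) (@tm_pair X A B).
Proof.
move=> f f' Ef g g' Eg.
rewrite (lambda_theory_bheq (tm_pair_comb f g)) (lambda_theory_bheq (tm_pair_comb f' g')).
by rewrite Ef Eg; reflexivity.
Qed.

#[global] Instance tm_curry_proper X A B :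
  Proper (@E (Arr (Prod X A) B) ==> @E (Arr X (Arr A B))) (@tm_curry X A B).
Proof.
move=> k k' Ek.
rewrite (lambda_theory_bheq (tm_curry_comb k)) (lambda_theory_bheq (tm_curry_comb k')).
by rewrite Ek; reflexivity.
Qed.

#[global] Instance tm_times_proper X Y A :
  Proper (@E (Arr X Y) ==> @E (Arr (Prod X A) (Prod Y A))) (@tm_times X Y A).
Proof. by move=> l l' El; rewrite /tm_times El; reflexivity. Qed.

Lemma comp_idl A B (f : tm nil (Arr A B)) : E (tm_id B ∘ f) f.
Proof. apply: lambda_theory_bheq; rewrite /tm_comp /tm_id; beta_reduce; exact: eta_lift. Qed.

Lemma comp_idr A B (f : tm nil (Arr A B)) : E (f ∘ tm_id A) f.
Proof. apply: lambda_theory_bheq; rewrite /tm_comp /tm_id; beta_reduce; exact: eta_lift. Qed.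

Lemma compA A B C D (h : tm nil (Arr C D)) (g : tm nil (Arr B C)) (f : tm nil (Arr A B)) :
  E (h ∘ (g ∘ f)) (h ∘ g ∘ f).
Proof. apply: lambda_theory_bheq; rewrite /tm_comp; beta_reduce; reflexivity. Qed.

Lemma tm_unit_uniq X (g : tm nil (Arr X One)) : E g (tm_unit X).
Proof.
by apply: lambda_theory_bheq; rewrite /tm_unit (be_eta_arr g) (be_eta_one (App _ _)); reflexivity.
Qed.

Lemma fst_pair X A B (f : tm nil (Arr X A)) (g : tm nil (Arr X B)) :
  E (tm_fst A B ∘ tm_pair f g) f.
Proof.
apply: lambda_theory_bheq; rewrite /tm_comp /tm_fst /tm_pair; beta_reduce; exact: eta_lift.
Qed.

Lemma snd_pair X A B (f : tm nil (Arr X A)) (g : tm nil (Arr X B)) :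
  E (tm_snd A B ∘ tm_pair f g) g.
Proof.
apply: lambda_theory_bheq; rewrite /tm_comp /tm_snd /tm_pair; beta_reduce; exact: eta_lift.
Qed.

Lemma pair_eta X A B (h : tm nil (Arr X (Prod A B))) :
  E (tm_pair (tm_fst A B ∘ h) (tm_snd A B ∘ h)) h.
Proof.
apply: lambda_theory_bheq; rewrite /tm_comp /tm_fst /tm_snd /tm_pair; beta_reduce.
by rewrite -be_eta_prod; exact: eta_lift.
Qed.

Lemma ev_curry X A B (k : tm nil (Arr (Prod X A) B)) :
  E (tm_ev A B ∘ tm_times A (tm_curry k)) k.
Proof.
apply: lambda_theory_bheq.
rewrite /tm_comp /tm_ev /tm_times /tm_curry /tm_fst /tm_snd /tm_pair; beta_reduce.
by rewrite -be_eta_prod; exact: eta_lift.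
Qed.

Lemma curry_ev X A B (l : tm nil (Arr X (Arr A B))) :
  E (tm_curry (tm_ev A B ∘ tm_times A l)) l.
Proof.
apply: lambda_theory_bheq.
rewrite /tm_comp /tm_ev /tm_times /tm_curry /tm_fst /tm_snd /tm_pair; beta_reduce.
transitivity (Lam (Lam (App (wk A (App (lift [:: X] l) (vz nil X))) (vz [:: X] A)))).
- by simpl_lift; reflexivity.
- by rewrite -be_eta_arr; exact: eta_lift.
Qed.

Lemma curry_natural X Y A B (k : tm nil (Arr (Prod Y A) B)) (l : tm nil (Arr X Y)) :
  E (tm_curry k ∘ l) (tm_curry (k ∘ tm_times A l)).
Proof.
apply: lambda_theory_bheq.
rewrite /tm_comp /tm_curry /tm_times /tm_pair /tm_fst /tm_snd; beta_reduce; reflexivity.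
Qed.

Lemma curry_inj X A B (k k' : tm nil (Arr (Prod X A) B)) :
  E (tm_curry k) (tm_curry k') -> E k k'.
Proof. by move=> Ekk'; rewrite -(ev_curry k) -(ev_curry k') Ekk'; reflexivity. Qed.

Lemma pair_uniq X A B (h : tm nil (Arr X (Prod A B))) f g :
  E (tm_fst A B ∘ h) f -> E (tm_snd A B ∘ h) g -> E h (tm_pair f g).
Proof. by move=> <- <-; rewrite pair_eta; reflexivity. Qed.

Lemma pair_comp Y X A B (f : tm nil (Arr X A)) (g : tm nil (Arr X B)) (k : tm nil (Arr Y X)) :
  E (tm_pair f g ∘ k) (tm_pair (f ∘ k) (g ∘ k)).
Proof. by apply: pair_uniq; rewrite compA ?fst_pair ?snd_pair; reflexivity. Qed.

Lemma pair_fst_snd A B : E (tm_pair (tm_fst A B) (tm_snd A B)) (tm_id _).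
Proof. by symmetry; apply: pair_uniq; apply: comp_idr. Qed.

Lemma times_pair X Y A Z (l : tm nil (Arr X Y)) (f : tm nil (Arr Z X)) (g : tm nil (Arr Z A)) :
  E (tm_times A l ∘ tm_pair f g) (tm_pair (l ∘ f) g).
Proof. by rewrite /tm_times pair_comp -compA fst_pair snd_pair; reflexivity. Qed.

Lemma times_id X A : E (tm_times A (tm_id X)) (tm_id _).
Proof. by rewrite /tm_times comp_idl pair_fst_snd; reflexivity. Qed.

Lemma curry_ev_id A B : E (tm_curry (tm_ev A B)) (tm_id _).
Proof.
by rewrite -(comp_idr (tm_ev A B)) -(times_id (Arr A B) A) curry_ev; reflexivity.
Qed.

End LambdaTheory.

Definition theory_cat (E : forall A, tm nil A -> tm nil A -> Prop) : TyCat := {|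
  hom := fun A B => tm nil (Arr A B);
  heq := fun A B M N => E _ M N;
  idm := tm_id;
  comp := tm_comp |}.

Section TheoryCategory.
Context (E : forall A, tm nil A -> tm nil A -> Prop) `{lambda_theory E}.

Definition tm_inverse X Y (f : tm nil (Arr X Y)) (g : tm nil (Arr Y X)) : Prop :=
  E (g ∘ f) (tm_id X) /\ E (f ∘ g) (tm_id Y).

#[global] Instance tm_inverse_proper X Y :
  Proper (@E (Arr X Y) ==> @E (Arr Y X) ==> iff) (@tm_inverse X Y).
Proof. by move=> f f' Ef g g' Eg; rewrite /tm_inverse Ef Eg. Qed.

Lemma tm_inverse_id X : tm_inverse (tm_id X) (tm_id X).
Proof. by split; apply: comp_idl. Qed.

Lemma theory_cat_category : is_category (theory_cat E).
Proof.
split; last split; last split; last split => /=.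
- by move=> A B; apply: lambda_theory_equiv.
- by move=> *; apply: tm_comp_proper.
- exact: comp_idl.
- exact: comp_idr.
- exact: compA.
Qed.

Lemma terminalP T : is_terminal (theory_cat E) T <-> exists j, tm_inverse (tm_unit T) j.
Proof.
split=> [HT | [j [jK _]] X].
- have [j _] := HT One; have [t /= Ht] := HT T.
  exists j; split; first by rewrite (Ht (j ∘ tm_unit T)) (Ht (tm_id T)); reflexivity.
  by rewrite (tm_unit_uniq (tm_unit T ∘ j)) (tm_unit_uniq (tm_id One)); reflexivity.
- exists (j ∘ tm_unit X) => g /=.
  by rewrite -(comp_idl g) -jK -compA (tm_unit_uniq (tm_unit T ∘ g)); reflexivity.
Qed.

Section PairInverse.
Variables (A B P : ty) (p1 : tm nil (Arr P A)) (p2 : tm nil (Arr P B)).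
Variable j : tm nil (Arr (Prod A B) P).
Hypothesis j_inv : tm_inverse (tm_pair p1 p2) j.

Lemma inverse_fst : E (p1 ∘ j) (tm_fst A B).
Proof.
by rewrite -(fst_pair p1 p2) -compA (proj2 j_inv) comp_idr; reflexivity.
Qed.

Lemma inverse_snd : E (p2 ∘ j) (tm_snd A B).
Proof.
by rewrite -(snd_pair p1 p2) -compA (proj2 j_inv) comp_idr; reflexivity.
Qed.

Lemma inverse_pair_expand Y (m : tm nil (Arr Y P)) : E m (j ∘ tm_pair (p1 ∘ m) (p2 ∘ m)).
Proof. by rewrite -pair_comp compA (proj1 j_inv) comp_idl; reflexivity. Qed.

End PairInverse.

Lemma productP A B P (p1 : tm nil (Arr P A)) (p2 : tm nil (Arr P B)) :
  is_product (C := theory_cat E) p1 p2 <-> exists j, tm_inverse (tm_pair p1 p2) j.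
Proof.
split=> [HP | [j j_inv] X f g].
- have [j [/= j1 [j2 _]]] := HP _ (tm_fst A B) (tm_snd A B).
  have [h [_ [_ /= h_uniq]]] := HP _ p1 p2.
  exists j; split; last by rewrite pair_comp j1 j2 pair_fst_snd; reflexivity.
  transitivity h; first by apply: h_uniq; rewrite compA ?j1 ?j2 ?fst_pair ?snd_pair; reflexivity.
  by symmetry; apply: h_uniq; apply: comp_idr.
- exists (j ∘ tm_pair f g) => /=; split; last split.
  + by rewrite compA (inverse_fst j_inv) fst_pair; reflexivity.
  + by rewrite compA (inverse_snd j_inv) snd_pair; reflexivity.
  + by move=> h' <- <-; apply: inverse_pair_expand.
Qed.

Lemma product_fst_snd A B : is_product (C := theory_cat E) (tm_fst A B) (tm_snd A B).
Proof.
by apply/productP; exists (tm_id _); rewrite pair_fst_snd; apply: tm_inverse_id.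
Qed.

Lemma inverse_pair_times A B P X Y (p1 : tm nil (Arr P X)) (p2 : tm nil (Arr P A)) j
    (q1 : tm nil (Arr Y B)) (q2 : tm nil (Arr Y A)) (l : tm nil (Arr B X)) m :
  tm_inverse (tm_pair p1 p2) j -> E (p1 ∘ m) (l ∘ q1) -> E (p2 ∘ m) q2 ->
  E m (j ∘ tm_times A l ∘ tm_pair q1 q2).
Proof.
move=> j_inv m1 m2.
by rewrite -compA times_pair -m1 -m2; apply: inverse_pair_expand.
Qed.

Lemma curry_comp_times X Y A B (k : tm nil (Arr (Prod Y A) B)) (k' : tm nil (Arr (Prod X A) B))
    (l : tm nil (Arr X Y)) :
  E (tm_curry k ∘ l) (tm_curry k') -> E (k ∘ tm_times A l) k'.
Proof. by move=> Ekk'; apply: curry_inj; rewrite -curry_natural. Qed.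

Section Exponential.
Variables (A B V P : ty) (p1 : tm nil (Arr P V)) (p2 : tm nil (Arr P A)).
Variable ev : tm nil (Arr P B).

Lemma transpose_iso_exponential j u :
  tm_inverse (tm_pair p1 p2) j -> tm_inverse (tm_curry (ev ∘ j)) u ->
  is_exponential (C := theory_cat E) p1 p2 ev.
Proof.
move=> j_inv [uK Ku]; split; first by apply/productP; exists j.
move=> X Y q1 q2 /productP [K [KK' K'K]] g.
have ev_m l m : E (p1 ∘ m) (l ∘ q1) -> E (p2 ∘ m) q2 ->
    E (ev ∘ m) (ev ∘ j ∘ tm_times A l ∘ tm_pair q1 q2).
  by move=> m1 m2; rewrite (inverse_pair_times j_inv m1 m2) !compA; reflexivity.
have transpose l :
    E (ev ∘ j ∘ tm_times A l ∘ tm_pair q1 q2) g <-> E l (u ∘ tm_curry (g ∘ K)).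
  split=> Hl.
  - rewrite -(comp_idl l) -uK -compA curry_natural -Hl -(compA _ _ K) K'K comp_idr.
    reflexivity.
  - rewrite -(comp_idr g) -KK' compA; apply: tm_comp_proper; last reflexivity.
    by apply: curry_comp_times; rewrite Hl compA Ku comp_idl; reflexivity.
exists (u ∘ tm_curry (g ∘ K)) => /=; split.
- by move=> m m1 m2; rewrite (ev_m _ _ m1 m2); apply/transpose; reflexivity.
- move=> l' Hl'; apply/transpose.
  set m := j ∘ tm_pair (l' ∘ q1) q2.
  have m1 : E (p1 ∘ m) (l' ∘ q1).
    by rewrite /m compA (inverse_fst j_inv) fst_pair; reflexivity.
  have m2 : E (p2 ∘ m) q2 by rewrite /m compA (inverse_snd j_inv) snd_pair; reflexivity.
  by rewrite -(ev_m _ _ m1 m2); apply: Hl'.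
Qed.

Lemma exponential_transpose_iso :
  is_exponential (C := theory_cat E) p1 p2 ev ->
  exists j, tm_inverse (tm_pair p1 p2) j /\ exists u, tm_inverse (tm_curry (ev ∘ j)) u.
Proof.
move=> [HP Hexp]; have /productP [j j_inv] := HP.
exists j; split=> //.
have [u [/= u_ev _]] := Hexp _ _ _ _ (@product_fst_snd (Arr A B) A) (tm_ev A B).
have Ku : E (tm_curry (ev ∘ j) ∘ u) (tm_id _).
  rewrite curry_natural -curry_ev_id -compA; apply: tm_curry_proper; apply: u_ev.
  - by rewrite compA (inverse_fst j_inv) /tm_times fst_pair; reflexivity.
  - by rewrite compA (inverse_snd j_inv) /tm_times snd_pair; reflexivity.
exists u; split=> //.
have [l0 [_ /= l0_uniq]] := Hexp _ _ _ _ HP ev.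
transitivity l0; [|symmetry]; apply: l0_uniq => m m1 m2.
- rewrite (inverse_pair_times j_inv m1 m2) !compA (@curry_comp_times _ _ _ _ _ (ev ∘ j)).
  + by rewrite -compA (proj1 j_inv) comp_idr; reflexivity.
  + by rewrite compA Ku comp_idl; reflexivity.
- by rewrite (inverse_pair_times j_inv m1 m2) times_id comp_idr (proj1 j_inv) comp_idr;
    reflexivity.
Qed.

End Exponential.

Lemma exponentialP A B V P (p1 : tm nil (Arr P V)) (p2 : tm nil (Arr P A)) (ev : tm nil (Arr P B)) :
  is_exponential (C := theory_cat E) p1 p2 ev <->
  exists j, tm_inverse (tm_pair p1 p2) j /\ exists u, tm_inverse (tm_curry (ev ∘ j)) u.
Proof.
split; first exact: exponential_transpose_iso.
by move=> [j [j_inv [u u_inv]]]; apply: transpose_iso_exponential j_inv u_inv.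
Qed.

End TheoryCategory.

Lemma theory_cat_ccc E `{lambda_theory E} : is_ccc (theory_cat E).
Proof.
split; last split; last split.
- exact: theory_cat_category.
- exists One; apply/terminalP; exists (tm_id One).
  by rewrite -(tm_unit_uniq (tm_id One)); apply: tm_inverse_id.
- by move=> A B; exists (Prod A B), (tm_fst A B), (tm_snd A B); apply: product_fst_snd.
- move=> A B; exists (Arr A B), (Prod (Arr A B) A), (tm_fst _ _), (tm_snd _ _), (tm_ev A B).
  apply/exponentialP; exists (tm_id _); rewrite pair_fst_snd; split; first exact: tm_inverse_id.
  by exists (tm_id _); rewrite comp_idr curry_ev_id; apply: tm_inverse_id.
Qed.

Section Transfer.
Context (E1 E2 : forall A, tm nil A -> tm nil A -> Prop).
Context `{lambda_theory E1} `{lambda_theory E2}.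
Hypothesis sub12 : forall A (M N : tm nil A), E1 M N -> E2 M N.

Lemma tm_inverse_sub X Y (f : tm nil (Arr X Y)) (g : tm nil (Arr Y X)) :
  tm_inverse E1 f g -> tm_inverse E2 f g.
Proof. by move=> [fg gf]; split; apply: sub12. Qed.

Lemma theory_cat_cc_functor :
  is_cc_functor (C := theory_cat E1) (D := theory_cat E2) (fun A B M => M).
Proof.
split; last split; last split.
- split; last split => /=; [by move=> A B; apply: sub12 | reflexivity | reflexivity].
- move=> T /terminalP [j /tm_inverse_sub j_inv].
  by apply/terminalP; exists j.
- move=> A B P p1 p2 /productP [j /tm_inverse_sub j_inv].
  by apply/productP; exists j.
- move=> A B V P p1 p2 ev /exponentialP [j [/tm_inverse_sub j_inv [u /tm_inverse_sub u_inv]]].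
  by apply/exponentialP; exists j; split; last exists u.
Qed.
End Transfer.

Section Evaluation.
Variable Q : Type.

Lemma eval_rename G A (M : tm G A) D (r : ren G D) (e : env Q D) (e' : env Q G) :
  (forall B v, lookup v e' = lookup (r B v) e) -> eval (rename M r) e = eval M e'.
Proof.
elim: M D r e e' =>
  [{}G {}A v | {}G {}A B M IH | {}G {}A B M IHM N IHN | {}G
  | {}G {}A B M IHM N IHN | {}G {}A B M IH | {}G {}A B M IH] D r e e' Hr /=.
- by rewrite Hr.
- by apply: functional_extensionality => x; apply: IH => C [|w] //=.
- by rewrite (IHM _ _ _ e') ?(IHN _ _ _ e').
- by [].
- by rewrite (IHM _ _ _ e') ?(IHN _ _ _ e').
- by rewrite (IH _ _ _ e').
- by rewrite (IH _ _ _ e').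
Qed.

Lemma eval_wk G A B (M : tm G A) x (e : env Q G) :
  eval (wk B M) ((x, e) : env Q (B :: G)) = eval M e.
Proof. exact: eval_rename. Qed.

Lemma eval_subst G A (M : tm G A) D (s : sub G D) (e : env Q D) (e' : env Q G) :
  (forall B v, lookup v e' = eval (s B v) e) -> eval (subst M s) e = eval M e'.
Proof.
elim: M D s e e' =>
  [{}G {}A v | {}G {}A B M IH | {}G {}A B M IHM N IHN | {}G
  | {}G {}A B M IHM N IHN | {}G {}A B M IH | {}G {}A B M IH] D s e e' Hs /=.
- by rewrite Hs.
- apply: functional_extensionality => x; apply: IH => C [|w] //=.
  by rewrite Hs eval_wk.
- by rewrite (IHM _ _ _ e') ?(IHN _ _ _ e').
- by [].
- by rewrite (IHM _ _ _ e') ?(IHN _ _ _ e').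
- by rewrite (IH _ _ _ e').
- by rewrite (IH _ _ _ e').
Qed.

Lemma eval_bheq G A (M N : tm G A) : bheq M N -> forall e : env Q G, eval M e = eval N e.
Proof.
elim=> {G A M N} /=; try congruence.
- by move=> G A B M M' _ IH e; apply: functional_extensionality => x; apply: IH.
- by move=> G A B M N e; symmetry; apply: eval_subst => C [h|w] //; case: C / h.
- by move=> G A B M e; apply: functional_extensionality => x; rewrite eval_wk.
- by move=> G A B M e; case: (eval M e).
- by move=> G M e; case: (eval M e).
Qed.

End Evaluation.

#[global] Instance simQ_lambda_theory (Q : finType) : lambda_theory (simQ Q).
Proof.
split; rewrite /simQ /interp.
- by move=> A; split=> [M | M N | M N P] //= -> .
- by move=> A M N /eval_bheq ->.
- by move=> A B M M' EM N N' EN /=; rewrite EM EN.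
Qed.

#[global] Instance bheq_lambda_theory : lambda_theory (@bheq nil).
Proof. by split=> [A | A M N | A B]; [apply: bheq_equiv | | apply: App_bheq]. Qed.

Fixpoint sem_default (Q : Type) (q0 : Q) (T : ty) : sem Q T :=
  match T return sem Q T with
  | Base => q0
  | One => tt
  | Prod A B => (sem_default q0 A, sem_default q0 B)
  | Arr A B => fun _ => sem_default q0 B
  end.

Fixpoint sem_map (Q Q' : Type) (f : Q -> Q') (g : Q' -> Q) (T : ty) : sem Q T -> sem Q' T :=
  match T return sem Q T -> sem Q' T with
  | Base => f
  | One => fun _ => tt
  | Prod A B => fun p => (sem_map f g A p.1, sem_map f g B p.2)
  | Arr A B => fun h x => sem_map f g B (h (sem_map g f A x))
  end.

Section LogicalRelation.
Variables (Q Q' : Type) (R : Q -> Q' -> Prop).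

Fixpoint sem_rel (T : ty) : sem Q T -> sem Q' T -> Prop :=
  match T return sem Q T -> sem Q' T -> Prop with
  | Base => R
  | One => fun _ _ => True
  | Prod A B => fun p p' => sem_rel A p.1 p'.1 /\ sem_rel B p.2 p'.2
  | Arr A B => fun h h' => forall x x', sem_rel A x x' -> sem_rel B (h x) (h' x')
  end.

Fixpoint env_rel (G : list ty) : env Q G -> env Q' G -> Prop :=
  match G return env Q G -> env Q' G -> Prop with
  | nil => fun _ _ => True
  | A :: G => fun e e' => sem_rel A e.1 e'.1 /\ env_rel G e.2 e'.2
  end.

Lemma lookup_sem_rel G A (v : var G A) e e' :
  env_rel G e e' -> sem_rel A (lookup v e) (lookup v e').
Proof.
elim: G v e e' => [[] | B G IH [h | w]] e e' [e1 e2] //=; last exact: IH.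
by move=> {IH}; case: A / h.
Qed.

Lemma eval_sem_rel G A (M : tm G A) e e' :
  env_rel G e e' -> sem_rel A (eval M e) (eval M e').
Proof.
elim: M e e' =>
  [{}G {}A v | {}G {}A B M IH | {}G {}A B M IHM N IHN | {}G
  | {}G {}A B M IHM N IHN | {}G {}A B M IH | {}G {}A B M IH] e e' ee' /=.
- exact: lookup_sem_rel.
- by move=> x x' xx'; apply: IH.
- exact: (IHM _ _ ee' _ _ (IHN _ _ ee')).
- by [].
- by split; [apply: IHM | apply: IHN].
- by case: (IH _ _ ee').
- by case: (IH _ _ ee').
Qed.

Hypothesis R_ps : partial_surjection R.

(* Provides the values, in the surjectivity proof at arrow types, on arguments that are related
   to nothing. *)
Lemma sem_fun_inhabited A B :
  (sem Q' A -> sem Q' B) -> inhabited (sem Q A -> sem Q B).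
Proof.
move=> f'; case: (classic (inhabited Q)) => [[q0] | noQ].
  by constructor=> _; exact: sem_default q0 B.
have noQ' : Q' -> False.
  by move=> q'; have [q _] := proj2 R_ps q'; apply: noQ.
pose to (q : Q) : Q' := match noQ (inhabits q) with end.
pose from (q' : Q') : Q := match noQ' q' with end.
by constructor=> x; exact: sem_map from to B (f' (sem_map to from A x)).
Qed.

Lemma sem_rel_partial_surjection T : partial_surjection (sem_rel T).
Proof.
elim: T => [| |A [funA surA] B [funB surB]|A [funA surA] B [funB surB]] //=.
- split; [by move=> ? [] [] | by move=> []; exists tt].
- split.
    move=> p [a1 b1] [a2 b2] /= [pa1 pb1] [pa2 pb2].
    by rewrite (funA _ _ _ pa1 pa2) (funB _ _ _ pb1 pb2).
  by move=> [a' b']; have [a aa'] := surA a'; have [b bb'] := surB b'; exists (a, b).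
- split.
    move=> h h1 h2 hh1 hh2; apply: functional_extensionality => a'.
    by have [a aa'] := surA a'; apply: funB (hh1 _ _ aa') (hh2 _ _ aa').
  move=> h'; have [d] := sem_fun_inhabited A B h'.
  have graph x : exists y, forall x', sem_rel A x x' -> sem_rel B y (h' x').
    case: (classic (exists x', sem_rel A x x')) => [[x0 xx0] | no_x'].
      have [y yy] := surB (h' x0); exists y => x' xx'.
      by rewrite (funA _ _ _ xx' xx0).
    by exists (d x) => x' xx'; case: no_x'; exists x'.
  by have [h hh] := functional_choice _ graph; exists h.
Qed.

Lemma interp_transfer A (M N : tm nil A) : interp Q M = interp Q N -> interp Q' M = interp Q' N.
Proof.
move=> MN; apply: (proj1 (sem_rel_partial_surjection A) (interp Q M)).
  exact: eval_sem_rel.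
by rewrite MN; exact: eval_sem_rel.
Qed.

End LogicalRelation.

Theorem mainTheorem9 :
  (forall Q : finType, is_ccc (LamQ Q) /\ is_cc_functor (piQ Q)) /\
  (forall (Q Q' : finType) (R : Q -> Q' -> Prop),
      partial_surjection R ->
      exists F : iofmap (LamQ Q) (LamQ Q'),
        is_cc_functor F /\
        forall A B (M : hom Lam_cat A B),
          heq (F A B (piQ Q M)) (piQ Q' M)).
Proof.
split=> [Q | Q Q' R R_ps].
- split; first exact: (theory_cat_ccc (E := simQ Q)).
  apply: (theory_cat_cc_functor (E1 := @bheq nil) (E2 := simQ Q)) => A M N MN.
  exact: eval_bheq.
- exists (fun A B M => M); split; last by [].
  apply: (theory_cat_cc_functor (E1 := simQ Q) (E2 := simQ Q')) => A M N.
  exact: interp_transfer R_ps A M N.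
Qed.
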